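(* The closure of the set of periodic points of $\Phi_{\mathrm{Id}}\colon\mathrm{M}\mapsto\mathrm{M}^2$ on $\mathcal{M}(2;\mathbb{C})$ is $\{\mathbf{0}\}\cup\Lambda^0\cup\Lambda^1\cup\Lambda^2$, where $\Lambda^0=\{\mathrm{M}:\det\mathrm{M}=0,\ |\mathrm{tr}\,\mathrm{M}|=1\}$, $\Lambda^1=\{\mathrm{M}:(\mathrm{tr}\,\mathrm{M})^2-4\det\mathrm{M}=0,\ |\det\mathrm{M}|=1\}$, $\Lambda^2=\{\mathrm{M}:\frac{(\mathrm{tr}\,\mathrm{M})^2}{\det\mathrm{M}}\in[0,4[,\ |\det\mathrm{M}|=1\}$.
   Context: $\mathbf{0}$ is the zero matrix. A point is periodic if $\Phi_{\mathrm{Id}}^k(\mathrm{M})=\mathrm{M}$ for some $k\geq1$. ($\Lambda^0$: one eigenvalue of modulus $1$ and the other zero; $\Lambda^1$: a double eigenvalue of modulus $1$; $\Lambda^2$: two distinct eigenvalues of modulus $1$.) *)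

(* The complex field is modelled as
   R[i] (real-closed `complex`) over an arbitrary R : realType; the alias
   R[i]^o equips it with its normed (hence topological) structure, and
   'M[R[i]^o]_2 carries the (product = usual) topology. *)
From mathcomp Require Import all_boot all_algebra.
From mathcomp Require Import all_classical all_reals all_analysis.
From mathcomp.real_closed Require Import complex.
Import GRing.Theory Num.Theory numFieldNormedType.Exports.
Unset Printing Implicit Defensive.
Local Open Scope ring_scope.
Local Open Scope classical_set_scope.

Definition Phi_Id (R : realType) (M : 'M[R[i]^o]_2) : 'M[R[i]^o]_2 := M ^+ 2.

Definition periodic_pts (R : realType) : set 'M[R[i]^o]_2 :=
  [set M | exists k : nat, (1 <= k)%N /\ iter k (@Phi_Id R) M = M].

Definition Lambda0 (R : realType) : set 'M[R[i]^o]_2 :=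
  [set M | \det M = 0 /\ `|\tr M| = 1].

Definition Lambda1 (R : realType) : set 'M[R[i]^o]_2 :=
  [set M | (\tr M) ^+ 2 - 4 * \det M = 0 /\ `|\det M| = 1].

(* Lambda^2 = { (tr M)^2 / det M in [0,4[ (a real number), |det M| = 1 }.
   In R[i], 0 <= z < 4 means z is real with 0 <= z < 4. *)
Definition Lambda2 (R : realType) : set 'M[R[i]^o]_2 :=
  [set M | 0 <= (\tr M) ^+ 2 / \det M < 4 /\ `|\det M| = 1].

(* If [M] has eigenvalues [l], [u], then [M^(2^k)] has eigenvalues [l^(2^k)],
   [u^(2^k)], so a periodic [M] has [l], [u] in {0} u S^1, and [M = 0] when
   both vanish (then [M^2 = 0]); these conditions are closed, being expressed
   by continuous functions of the trace and the determinant.  Conversely, the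
   fixed points of [z |-> z^(2^k)] (0 and the (2^k-1)-th roots of unity)
   become dense in S^1, a matrix with two distinct such eigenvalues is
   periodic by Cayley-Hamilton, and any [M] of the right-hand side is
   approximated by such matrices by moving its diagonal so as to prescribe
   its trace and determinant. *)

From mathcomp Require Import all_boot all_algebra.
From mathcomp Require Import all_classical all_reals all_analysis.
From mathcomp.real_closed Require Import complex.
From mathcomp Require Import ring lra zify.
Import GRing.Theory Num.Theory numFieldNormedType.Exports.
Import order.Order.TTheory.
Local Open Scope ring_scope.
Local Open Scope classical_set_scope.

Local Notation i0 := (ord0 : 'I_2).
Local Notation i1 := (lift ord0 ord0 : 'I_2).

Lemma ord2P (i : 'I_2) : i = i0 \/ i = i1.
Proof. by case: i => [[|[|//]] ?]; [left | right]; apply: val_inj. Qed.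

Section Matrix2.
Context {K : comNzRingType}.
Implicit Types (M : 'M[K]_2) (a b l u : K).

Lemma mxtrace2 M : \tr M = M i0 i0 + M i1 i1.
Proof. by rewrite /mxtrace big_ord_recl big_ord1. Qed.

Lemma det_mx2 M : \det M = M i0 i0 * M i1 i1 - M i0 i1 * M i1 i0.
Proof.
rewrite (expand_det_row _ ord0) big_ord_recl big_ord1 /cofactor !det_mx11.
rewrite !mxE /= expr0 expr1 !mul1r mulN1r mulrN.
by congr (_ * M _ _ - _ * M _ _); apply: val_inj.
Qed.

Lemma Cayley_Hamilton2 M : M ^+ 2 = \tr M *: M - (\det M)%:M.
Proof.
apply/matrixP => i j; rewrite expr2 !mxE big_ord_recl big_ord1 mxtrace2 det_mx2.
by case: (ord2P i) => ->; case: (ord2P j) => ->; rewrite /= ?mxE /= ?mulr1n ?mulr0n; ring.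
Qed.

Lemma exprSS_mx2 M m : M ^+ m.+2 = \tr M *: M ^+ m.+1 - \det M *: M ^+ m.
Proof.
have -> : M ^+ m.+2 = M ^+ m * M ^+ 2 by rewrite -exprD addn2.
rewrite Cayley_Hamilton2 mulrBr -scalerAr -exprSr.
by rewrite -mulmxE mul_mx_scalar.
Qed.

Lemma det_mx2X M m : \det (M ^+ m) = \det M ^+ m.
Proof.
elim: m => [|m IH]; first by rewrite !expr0 det1.
by rewrite !exprS -mulmxE det_mulmx IH.
Qed.

Lemma mxtrace2X M l u : l + u = \tr M -> l * u = \det M ->
  forall m, \tr (M ^+ m) = l ^+ m + u ^+ m.
Proof.
move=> Ht Hd m; suff [] : \tr (M ^+ m) = l ^+ m + u ^+ m /\
                        \tr (M ^+ m.+1) = l ^+ m.+1 + u ^+ m.+1 by [].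
elim: m => [|m [IH1 IH2]]; first by rewrite !expr0 !expr1 mxtrace1 Ht.
split => //; rewrite exprSS_mx2 raddfB /= !mxtraceZ IH1 IH2 -Ht -Hd !exprS; ring.
Qed.

(* The Lagrange interpolation of [X^(m+1)] at the eigenvalues [a] and [b]. *)
Lemma exprS_mx2_eigen M a b : \tr M = a + b -> \det M = a * b ->
  forall m, (a - b) *: M ^+ m.+1 =
     (a ^+ m.+1 - b ^+ m.+1) *: M - (a * b * (a ^+ m - b ^+ m)) *: 1.
Proof.
move=> Ht Hd; elim=> [|m IH]; first by rewrite expr1 !expr0 subrr mulr0 scale0r subr0.
rewrite exprSr scalerAl IH mulrBl -scalerAl -expr2 Cayley_Hamilton2 Ht Hd.
rewrite -scalerAl mul1r -scalemx1 scalerBr !scalerA addrAC -scalerBl.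
by congr (_ *: _ - _ *: _); rewrite !exprS; ring.
Qed.

End Matrix2.

Arguments mxtrace2X {K M l u}.

Lemma mx2_expr_fixed {F : fieldType} {M : 'M[F]_2} {a b : F} {n : nat} : (0 < n)%N ->
  \tr M = a + b -> \det M = a * b -> a != b ->
  a ^+ n = a -> b ^+ n = b -> M ^+ n = M.
Proof.
case: n => // m _ Ht Hd ab Ha Hb.
apply: (scalerI (_ : a - b != 0)); first by rewrite subr_eq0.
rewrite exprS_mx2_eigen // Ha Hb.
have -> : a * b * (a ^+ m - b ^+ m) = b * a ^+ m.+1 - a * b ^+ m.+1.
  by rewrite !exprS; ring.
by rewrite Ha Hb mulrC subrr scale0r subr0.
Qed.

Lemma eq_sum_prod2 {D : idomainType} {x y a b : D} : x + y = a + b -> x * y = a * b ->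
  (x = a /\ y = b) \/ (x = b /\ y = a).
Proof.
move=> Hs Hp; have /eqP : (x - a) * (x - b) = 0.
  transitivity (x * x - (a + b) * x + a * b); first by ring.
  by rewrite -Hs -Hp; ring.
rewrite mulf_eq0 => /orP [] /eqP /subr0_eq Hx; [left | right]; split => //;
  by apply/(addrI x); rewrite Hs Hx // addrC.
Qed.

Lemma sum_prod_roots {C : numClosedFieldType} (p q : C) :
  exists l u : C, l + u = p /\ l * u = q.
Proof.
set s := sqrtC (p ^+ 2 - 4 * q).
exists ((p + s) / 2), ((p - s) / 2); split; first by field.
have Hs : s ^+ 2 = p ^+ 2 - 4 * q by rewrite sqrtCK.
by transitivity ((p ^+ 2 - s ^+ 2) / 4); [field | rewrite Hs; field].
Qed.

Lemma expr_fixed_norm {C : numDomainType} {x : C} {m : nat} : (1 < m)%N -> x ^+ m = x ->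
  x = 0 \/ `|x| = 1.
Proof.
move=> m1 Hx; have [->|x0] := eqVneq x 0; [by left | right].
have H1 : x ^+ m.-1 = 1.
  by apply: (mulfI x0); rewrite mulr1 -exprS prednK ?Hx // ltnW.
have : `|x| ^+ m.-1 == 1 by rewrite -normrX H1 normr1.
by rewrite pexpr_eq1 ?normr_ge0 -?subn1 ?subn_gt0 // => /eqP.
Qed.

Lemma parallelogram {C : numClosedFieldType} (x y : C) :
  `|x + y| ^+ 2 + `|x - y| ^+ 2 = 2 * `|x| ^+ 2 + 2 * `|y| ^+ 2.
Proof. by rewrite !normCK rmorphD rmorphB /=; ring. Qed.

Lemma normD_eq_segment {C : numClosedFieldType} (c z : C) : 0 < c ->
  `|z| + `|c - z| = c <-> 0 <= z <= c.
Proof.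
move=> c0; split => [H|/andP [z0 zc]]; last first.
  by rewrite ger0_norm // ger0_norm ?subr_ge0 // addrC subrK.
have /normCDeq [t _ [Ez Ecz]] : `|z + (c - z)| = `|z| + `|c - z|.
  by rewrite addrC subrK gtr0_norm.
have t1 : t = 1.
  apply: (mulfI (lt0r_neq0 c0)); rewrite mulr1 -{1}H mulrDl -Ez -Ecz.
  by rewrite addrC subrK.
rewrite -[z <= c]subr_ge0 Ecz t1 mulr1 normr_ge0 andbT.
by rewrite Ez t1 mulr1 normr_ge0.
Qed.

(* The right-hand side of the theorem, rewritten through continuous functions
   of the trace and determinant: by the parallelogram law, in the last
   component the eigenvalues [l], [u] satisfy [|l u| = 1] and
   [|l|^2 + |u|^2 = 2], i.e. both lie on the unit circle. *)
Definition Lambda_trdet {C : numClosedFieldType} : set 'M[C]_2 :=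
  [set M | M = 0] `|` [set M | \det M = 0 /\ `|\tr M| = 1] `|`
  [set M | `|\det M| = 1 /\ `|\tr M| ^+ 2 + `|\tr M ^+ 2 - 4 * \det M| = 4].

Lemma expr_fixed_Lambda_trdet {C : numClosedFieldType} (M : 'M[C]_2) N :
  (1 < N)%N -> M ^+ N = M -> Lambda_trdet M.
Proof.
move=> N1 HM; have [l [u [Ht Hd]]] := sum_prod_roots (\tr M) (\det M).
have Htr : l ^+ N + u ^+ N = l + u by rewrite -(mxtrace2X Ht Hd N) HM Ht.
have Hdt : l ^+ N * u ^+ N = l * u by rewrite -exprMn Hd -det_mx2X HM.
have [Hl Hu] : l ^+ (N * N) = l /\ u ^+ (N * N) = u.
  by rewrite !exprM; case: (eq_sum_prod2 Htr Hdt) => -[El Eu]; rewrite El Eu ?El ?Eu.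
have NN1 : (1 < N * N)%N by rewrite (@ltn_mul 1 1).
have [l0|l1] := expr_fixed_norm NN1 Hl; have [u0|u1] := expr_fixed_norm NN1 Hu.
- have M2 : M ^+ 2 = 0.
    by rewrite Cayley_Hamilton2 -Ht -Hd l0 u0 add0r mul0r scale0r raddf0 subr0.
  by left; left; rewrite /= -HM -(subnK N1) exprD M2 mulr0.
- by left; right; split; rewrite /= -?Hd -?Ht l0 ?mul0r ?add0r.
- by left; right; split; rewrite /= -?Hd -?Ht u0 ?mulr0 ?addr0.
- right; split; first by rewrite -Hd normrM l1 u1 mulr1.
  have -> : \tr M ^+ 2 - 4 * \det M = (l - u) ^+ 2 by rewrite -Ht -Hd; ring.
  by rewrite normrX -Ht parallelogram l1 u1; ring.
Qed.

Lemma norm_disc_unit_det {C : numFieldType} (t d : C) : `|d| = 1 ->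
  `|t| ^+ 2 + `|t ^+ 2 - 4 * d| = `|t ^+ 2 / d| + `|4 - t ^+ 2 / d|.
Proof.
move=> d1; have d0 : d != 0 by rewrite -normr_eq0 d1 oner_eq0.
rewrite -normrX; set z := t ^+ 2 / d; have -> : t ^+ 2 = z * d by rewrite divfK.
by rewrite -mulrBl !normrM d1 !mulr1 distrC.
Qed.

Lemma Lambda_trdetE (R : realType) :
  [set (0 : 'M[R[i]^o]_2)] `|` Lambda0 R `|` Lambda1 R `|` Lambda2 R =
  @Lambda_trdet R[i]^o.
Proof.
have c4 : (0 : R[i]^o) < 4 by rewrite ltr0n.
apply/seteqP; split => M.
- case=> [[[->|?]|[/subr0_eq Hdisc Hd]]|[/andP [z0 z4] Hd]].
  + by left; left.
  + by left; right.
  + right; split => //.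
    by rewrite -normrX Hdisc subrr normr0 addr0 normrM Hd gtr0_norm // mulr1.
  + right; split => //; rewrite norm_disc_unit_det //.
    by apply/normD_eq_segment => //; rewrite z0 ltW.
- case=> [[->|?]|[Hd]]; [by left; left; left | by left; left; right |].
  rewrite norm_disc_unit_det // => /(normD_eq_segment _ _ c4) /andP [z0 z4].
  have d0 : \det M != 0 by rewrite -normr_eq0 Hd oner_eq0.
  have [z_eq4|z_neq4] := eqVneq (\tr M ^+ 2 / \det M) 4.
    by left; right; split => //; rewrite -(divfK d0 (\tr M ^+ 2)) z_eq4 subrr.
  by right; split => //; rewrite z0 lt_neqAle z_neq4 z4.
Qed.

Lemma Lambda_trdet_eigen {C : numClosedFieldType} {M : 'M[C]_2} :
  Lambda_trdet M -> M != 0 -> exists l u : C,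
  [/\ l + u = \tr M, l * u = \det M, `|u| = 1 & l = 0 \/ `|l| = 1].
Proof.
move=> HM M0; have [l [u [Ht Hd]]] := sum_prod_roots (\tr M) (\det M).
case: HM => [[/eqP M0'|[d0 t1]]|[d1 Hpar]]; first by rewrite M0' in M0.
  move: d0; rewrite -Hd => /eqP; rewrite mulf_eq0 => /orP [] /eqP lu0.
    by exists l, u; split; [| | | left] => //; rewrite -t1 -Ht lu0 add0r.
  exists u, l; split; [by rewrite addrC | by rewrite mulrC | | by left].
  by rewrite -t1 -Ht lu0 addr0.
have e1 : `|l| * `|u| = 1 by rewrite -normrM Hd.
have e2 : `|l| ^+ 2 + `|u| ^+ 2 = 2.
  have : 2 * `|l| ^+ 2 + 2 * `|u| ^+ 2 = 4.
    rewrite -parallelogram Ht -Hpar; congr (_ + _).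
    by rewrite -normrX -Ht -Hd; congr `|_|; ring.
  by move=> H; apply: (mulfI (_ : (2 : C) != 0)); rewrite ?pnatr_eq0 // mulrDr H; ring.
have elu : `|l| = `|u|.
  have /eqP : (`|l| - `|u|) ^+ 2 = 0.
    transitivity (`|l| ^+ 2 + `|u| ^+ 2 - 2 * (`|l| * `|u|)); first by ring.
    by rewrite e2 e1; ring.
  by rewrite expf_eq0 /= subr_eq0 => /eqP.
have u1 : `|u| = 1.
  by apply/eqP; rewrite -sqrp_eq1 ?normr_ge0 // expr2 -{1}elu e1.
by exists l, u; split; [| | | right] => //; rewrite elu.
Qed.

Lemma closed_fiber {T U : topologicalType} (f : T -> U) (c : U) :
  hausdorff_space U -> continuous f -> closed [set x | f x = c].
Proof.
move=> hU cf; apply: (@preimage_closed _ _ f [set c]); first by move=> x _; exact: cf.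
exact/accessible_closed_set1/hausdorff_accessible.
Qed.

Section Topology.
Variable R : realType.
Local Notation C := R[i]^o.

Lemma mxtrace2_continuous : continuous (fun M : 'M[C]_2 => \tr M).
Proof.
have -> : (fun M : 'M[C]_2 => \tr M) = fun M => M i0 i0 + M i1 i1.
  by apply: funext => M; rewrite mxtrace2.
move=> M; have c i j := @coord_continuous _ 2 2 i j M.
exact: (continuousD (c i0 i0) (c i1 i1)).
Qed.

Lemma det_mx2_continuous : continuous (fun M : 'M[C]_2 => \det M).
Proof.
have -> : (fun M : 'M[C]_2 => \det M) = fun M => M i0 i0 * M i1 i1 - M i0 i1 * M i1 i0.
  by apply: funext => M; rewrite det_mx2.
move=> M; have c i j := @coord_continuous _ 2 2 i j M.
exact: (continuousB (continuousM (c i0 i0) (c i1 i1)) (continuousM (c i0 i1) (c i1 i0))).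
Qed.

Lemma Lambda_trdet_closed : closed (@Lambda_trdet C).
Proof.
have hC : hausdorff_space C by exact: norm_hausdorff.
have cnorm (f : 'M[C]_2 -> C) : continuous f -> continuous (fun M => `|f M|).
  by move=> cf M; apply: (continuous_comp (cf M)); exact: norm_continuous.
have ctr := mxtrace2_continuous; have cdet := det_mx2_continuous.
apply: closedU; first apply: closedU.
- exact/accessible_closed_set1/hausdorff_accessible/norm_hausdorff.
- apply: closedI; first exact: (closed_fiber _ _ hC cdet).
  exact: (closed_fiber _ _ hC (cnorm _ ctr)).
- apply: closedI; first exact: (closed_fiber _ _ hC (cnorm _ cdet)).
  have csq (f : 'M[C]_2 -> C) : continuous f -> continuous (fun M => f M ^+ 2).
    by move=> cf M; exact: (continuousM (cf M) (cf M)).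
  have cdisc : continuous (fun M : 'M[C]_2 => \tr M ^+ 2 - 4 * \det M).
    move=> M; have c4 := @cst_continuous _ C 4 M.
    exact: (continuousB (csq _ ctr M) (continuousM c4 (cdet M))).
  apply: (closed_fiber _ _ hC) => M.
  exact: (continuousD (csq _ (cnorm _ ctr) M) (cnorm _ cdisc M)).
Qed.

End Topology.

Lemma iter_Phi_Id (R : realType) (M : 'M[R[i]^o]_2) k :
  iter k (@Phi_Id R) M = M ^+ (2 ^ k).
Proof.
elim: k => [|k IH]; first by rewrite expr1.
by rewrite iterS IH /Phi_Id -exprM expnSr.
Qed.

Section Approximation.
Variable R : realType.
Local Notation C := R[i]^o.
Local Notation normc := (@Normc.normc R).

Lemma normcE (z : C) : `|z| = ((normc z)%:C)%C.
Proof. by case: z. Qed.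

Lemma normc_ge0 (z : C) : 0 <= normc z.
Proof. by case: z => ? ?; exact: sqrtr_ge0. Qed.

Lemma normcB (x y : C) : normc (x - y) <= normc x + normc y.
Proof. by rewrite -(normcN y); exact: le_normcD. Qed.

Lemma distcC (x y : C) : normc (x - y) = normc (y - x).
Proof. by rewrite -normcN opprB. Qed.

Lemma normc1_neq0 (z : C) : normc z = 1 -> z != 0.
Proof. by apply: contra_eq_neq => ->; rewrite Normc.normc0 eq_sym oner_neq0. Qed.

Lemma closure_periodic_entrywise (M : 'M[C]_2) :
  (forall e : R, 0 < e -> exists2 P, periodic_pts R P &
     forall i j, normc (P i j - M i j) < e) ->
  closure (periodic_pts R) M.
Proof.
move=> H B /nbhs_ballP [[er ei] /= e0 eB].
have [/eqP ei0 er0] : ei == 0 /\ 0 < er by move: e0; rewrite ltcE => /andP.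
have [P HP PM] := H er er0; exists P; split => //; apply: eB; split => // i j.
by rewrite -ball_normE /ball_ /= normcE ei0 ltcR distcC.
Qed.

Definition cis (x : R) : C := (cos x +i* sin x)%C.

Lemma cisD x y : cis (x + y) = cis x * cis y.
Proof. by apply/eqP; rewrite eq_complex /= cosD sinD eqxx addrC eqxx. Qed.

Lemma cisX x n : cis x ^+ n = cis (x *+ n).
Proof.
elim: n => [|n IH]; first by rewrite expr0 mulr0n /cis cos0 sin0.
by rewrite exprS IH mulrS cisD.
Qed.

Lemma cis2pi : cis (pi *+ 2) = 1.
Proof. by rewrite /cis cos2pi sin2pi. Qed.

Lemma normc_cis x : normc (cis x) = 1.
Proof. by rewrite /= cos2Dsin2 sqrtr1. Qed.

Lemma normc_cisB x y : normc (cis x - cis y) ^+ 2 = 2 - 2 * cos (x - y).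
Proof.
rewrite /= sqr_sqrtr ?addr_ge0 ?sqr_ge0 // cosB.
have cx := cos2Dsin2 x; have cy := cos2Dsin2 y.
transitivity ((cos x ^+ 2 + sin x ^+ 2) + (cos y ^+ 2 + sin y ^+ 2)
              - 2 * (cos x * cos y + sin x * sin y)); first by ring.
by rewrite cx cy; ring.
Qed.

Lemma cis_polar (l : C) : normc l = 1 -> exists2 phi, 0 <= phi & l = cis phi.
Proof.
case: l => a b /= H.
have Hab : a ^+ 2 + b ^+ 2 = 1.
  by rewrite -[LHS]sqr_sqrtr ?H ?expr1n // addr_ge0 ?sqr_ge0.
have ha : -1 <= a <= 1 by apply/andP; split; nra.
have ca : cos (acos a) = a by apply: acosK; rewrite in_itv /=.
have sa : sin (acos a) = `|b|.
  by rewrite sin_acos // -sqrtr_sqr -Hab addrC addKr.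
have [a0 api] := (acos_ge0 ha, acos_lepi ha).
have [b0|b0] := leP 0 b.
  by exists (acos a) => //; rewrite /cis ca sa ger0_norm.
exists (pi *+ 2 - acos a); first by rewrite subr_ge0 mulr2n; have := pi_ge0 R; lra.
rewrite /cis cosB sinB cos2pi sin2pi ca sa ltr0_norm //.
by apply/eqP; rewrite eq_complex /= !mul1r !mul0r addr0 sub0r opprK !eqxx.
Qed.

Lemma cis_uniform_continuous {eps : R} : 0 < eps ->
  exists2 d : R, 0 < d & forall x y, `|x - y| < d -> normc (cis x - cis y) < eps.
Proof.
move=> e0; have e2 : 0 < eps ^+ 2 / 2 by rewrite divr_gt0 // exprn_gt0.
have /cvgrPdist_lt /(_ _ e2) /nbhs_ballP [d d0 Hd] := @continuous_cos R 0.
exists d => // x y hxy.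
have := Hd (x - y); rewrite /ball /= sub0r normrN cos0 => /(_ hxy) hc.
have := ler_norm (1 - cos (x - y)).
have := normc_cisB x y; have := normc_ge0 (cis x - cis y).
set c := cos (x - y); set n := normc _ => n0 En hcn.
have hc2 : `|1 - c| * 2 < eps ^+ 2 by rewrite -ltr_pdivlMr.
have : n ^+ 2 < eps ^+ 2 by lra.
by rewrite ltr_pXn2r // ?nnegrE // ltW.
Qed.

Lemma cis_root_fixed n m : (0 < n)%N ->
  (cis (pi *+ 2 / n%:R) ^+ m) ^+ n.+1 = cis (pi *+ 2 / n%:R) ^+ m.
Proof.
move=> n0; have root1 : cis (pi *+ 2 / n%:R) ^+ n = 1.
  by rewrite cisX -[X in cis X]mulr_natr divfK ?cis2pi // pnatr_eq0 -lt0n.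
by rewrite exprS -exprM mulnC exprM root1 expr1n mulr1.
Qed.

Lemma cis_neq1 {h} : 0 < h -> h < pi -> cis h != 1.
Proof.
move=> h0 hpi; have := sin_gt0_pi (introT andP (conj h0 hpi)).
by apply: contraTneq => /(congr1 (@complex.Im R)) /= ->; rewrite ltxx.
Qed.

Lemma floor_grid {h x : R} : 0 < h -> 0 <= x -> exists j : nat, h *+ j <= x < h *+ j.+1.
Proof.
move=> h0 x0; have /andP [j1 j2] := truncn_itv (divr_ge0 x0 (ltW h0)).
exists (Num.truncn (x / h)).
by rewrite -!(mulr_natl h) -ler_pdivlMr // -ltr_pdivrMr // j1.
Qed.

Lemma fixed_points_near {l : C} {eps : R} : normc l = 1 -> 0 < eps ->
  exists k0, forall k, (k0 <= k)%N -> exists a b : C,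
  [/\ a != b, a ^+ (2 ^ k) = a /\ b ^+ (2 ^ k) = b, normc a = 1 &
      normc (a - l) < eps /\ normc (b - l) < eps].
Proof.
move=> /cis_polar [phi phi0 ->] e0.
have [d d0 Hd] := cis_uniform_continuous e0.
exists (Num.truncn (pi *+ 2 / d)).+3 => k Hk.
set n := (2 ^ k).-1; have kN : (2 ^ k)%N = n.+1 by rewrite prednK ?expn_gt0.
have kn : (k <= n)%N by rewrite -ltnS -kN ltn_expl.
have nR : (3 : R) <= n%:R by rewrite ler_nat; lia.
have pi0 := pi_gt0 R.
pose h : R := pi *+ 2 / n%:R.
have nR0 : 0 < (n%:R : R) by lra.
have h0 : 0 < h by rewrite divr_gt0 // mulrn_wgt0.
have hd : h < d.
  rewrite ltr_pdivrMr // mulrC -ltr_pdivrMr //; apply: lt_le_trans (truncnS_gt _) _.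
  rewrite ler_nat; apply: leq_trans kn; apply: leq_trans Hk.
  exact: leq_trans (leqnSn _) (leqnSn _).
have hpi : h < pi by rewrite ltr_pdivrMr // mulr2n; nra.
have [j /andP [hj1 hj2]] := floor_grid h0 phi0.
exists (cis h ^+ j), (cis h ^+ j.+1); split.
- rewrite exprS; apply: contraNneq (cis_neq1 h0 hpi) => E; apply/eqP.
  apply: (mulIf (_ : cis h ^+ j != 0)); last by rewrite mul1r.
  by rewrite expf_neq0 // normc1_neq0 ?normc_cis.
- have n0 : (0 < n)%N by rewrite -(ltr0n R).
  by rewrite kN /h !cis_root_fixed.
- by rewrite cisX normc_cis.
- by rewrite !cisX; split; apply: Hd; rewrite ltr_norml; apply/andP; split;
    rewrite ?mulrSr; lra.
Qed.

Lemma fixed_pair_near {l u : C} {eta : R} : 0 < eta -> normc u = 1 ->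
  l = 0 \/ normc l = 1 -> exists k (a b : C),
  [/\ (0 < k)%N, a != b, a ^+ (2 ^ k) = a /\ b ^+ (2 ^ k) = b, normc a <= 1 &
      normc (a - l) < eta /\ normc (b - u) < eta].
Proof.
move=> e0 u1 [->|l1].
  have [k0 Hk0] := fixed_points_near u1 e0.
  have [b [_ [_ [Hb _ nb [db _]]]]] := Hk0 (maxn k0 1) (leq_maxl _ _).
  exists (maxn k0 1), 0, b; split; rewrite ?leq_max ?orbT ?subr0 ?Normc.normc0 //.
  - by rewrite eq_sym normc1_neq0.
  - by rewrite expr0n expn_eq0.
have [k0 Hk0] := fixed_points_near l1 e0; have [k1 Hk1] := fixed_points_near u1 e0.
pose k := maxn (maxn k0 k1) 1.
have [a [_ [_ [Ha _ na [da _]]]]] := Hk0 k (leq_trans (leq_maxl k0 k1) (leq_maxl _ _)).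
have [b1 [b2 [b12 [Hb1 Hb2] _ [db1 db2]]]] :=
  Hk1 k (leq_trans (leq_maxr k0 k1) (leq_maxl _ _)).
exists k, a, (if b1 == a then b2 else b1); split; rewrite ?leq_max ?orbT ?na //.
- by have [<-|] := eqVneq b1 a; rewrite // eq_sym.
- by case: ifP.
- by case: ifP.
Qed.

(* Only the diagonal of [M] is moved: its first entry by a root [x] of a
   quadratic, chosen as the smaller root so that [|x|^2 <= |x1 x2| = |q|]. *)
Lemma mx2_diag_perturb (M : 'M[C]_2) (a b : C) : exists P : 'M[C]_2,
  [/\ \tr P = a + b, \det P = a * b, forall i j, i != j -> P i j = M i j,
      normc (P i0 i0 - M i0 i0) ^+ 2 <=
        normc (a * b - \det M) + normc (M i0 i0) * normc (a + b - \tr M)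
    & P i1 i1 - M i1 i1 = (a + b - \tr M) - (P i0 i0 - M i0 i0)].
Proof.
set s := a + b - \tr M; set q := a * b - \det M - M i0 i0 * s.
set p := M i1 i1 - M i0 i0 + s.
have [x1 [x2 [Hp Hq]]] := sum_prod_roots p q.
have [x Hx Hxq] : exists2 x, x ^+ 2 - p * x + q = 0 & normc x ^+ 2 <= normc q.
  have [n1 n2] := (normc_ge0 x1, normc_ge0 x2).
  case: (leP (normc x1) (normc x2)) => h; [exists x1 | exists x2].
  - by rewrite -Hp -Hq; ring.
  - by rewrite -Hq Normc.normcM expr2 ler_wpM2l.
  - by rewrite -Hp -Hq; ring.
  - by rewrite -Hq Normc.normcM expr2 mulrC ler_wpM2r // ltW.
pose P := \matrix_(i, j) (M i j + (if i == j then (if i == i0 then x else s - x) else 0)).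
exists P; split.
- by rewrite !mxtrace2 !mxE /= /s mxtrace2; ring.
- rewrite det_mx2 !mxE /=; apply/eqP; rewrite -subr_eq0; apply/eqP.
  transitivity (- (x ^+ 2 - p * x + q)); last by rewrite Hx oppr0.
  by rewrite /p /q /s det_mx2 mxtrace2; ring.
- by move=> i j /negPf ij; rewrite !mxE ij addr0.
- rewrite !mxE /= addrC addKr; apply: le_trans Hxq _.
  by rewrite -Normc.normcM; apply: le_trans (normcB _ _) _.
- by rewrite !mxE /=; ring.
Qed.

Lemma mx2_near_spectrum (M : 'M[C]_2) {e : R} : 0 < e -> exists2 delta : R, 0 < delta &
  forall a b : C, normc (a + b - \tr M) < delta -> normc (a * b - \det M) < delta ->
  exists2 P : 'M[C]_2, \tr P = a + b /\ \det P = a * b &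
    forall i j, normc (P i j - M i j) < e.
Proof.
move=> e0; set A := normc (M i0 i0); have A0 : 0 <= A := normc_ge0 _.
pose delta := Num.min (e / 2) (e ^+ 2 / (4 * (1 + A))).
have d0 : 0 < delta by rewrite lt_min !divr_gt0 ?exprn_gt0 ?mulr_gt0 //; lra.
have [d1 d2] : delta <= e / 2 /\ delta * (4 * (1 + A)) <= e ^+ 2.
  by rewrite -ler_pdivlMr ?ge_min ?lexx ?orbT //; lra.
clearbody delta; exists delta => // a b hs hp.
have [P [Pt Pd Poff Px Py]] := mx2_diag_perturb M a b.
exists P => // i j.
have [<-|ij] := eqVneq i j; last by rewrite Poff // subrr Normc.normc0.
set x := P i0 i0 - M i0 i0 in Px Py.
have hx : normc x < e / 2.
  rewrite -(ltr_pXn2r (_ : (0 < 2)%N)) ?nnegrE ?normc_ge0 ?divr_ge0 ?ltW //.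
  have hAs : A * normc (a + b - \tr M) <= A * delta by apply: ler_wpM2l => //; apply: ltW.
  have -> : (e / 2) ^+ 2 = e ^+ 2 / 4 by field.
  by apply: le_lt_trans Px _; rewrite -/A; lra.
case: (ord2P i) => ->; first lra.
by rewrite Py; apply: le_lt_trans (normcB _ _) _; lra.
Qed.

Lemma closure_periodic_of_eigen {M : 'M[C]_2} {l u : C} :
  l + u = \tr M -> l * u = \det M -> `|u| = 1 -> l = 0 \/ `|l| = 1 ->
  closure (periodic_pts R) M.
Proof.
move=> Ht Hd u1 hl; apply: closure_periodic_entrywise => e e0.
have [delta d0 Hdelta] := mx2_near_spectrum M e0.
have eta0 : 0 < delta / 2 by rewrite divr_gt0.
have normc1 (z : C) : `|z| = 1 -> normc z = 1 by rewrite normcE => -[].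
have hl' : l = 0 \/ normc l = 1 by case: hl => [|/normc1]; [left | right].
have [k [a [b [k0 ab [Ha Hb] na [dal dbu]]]]] := fixed_pair_near eta0 (normc1 _ u1) hl'.
have [n1 n2] := (normc_ge0 (a - l), normc_ge0 (b - u)).
have hs : normc (a + b - \tr M) < delta.
  rewrite -Ht (_ : a + b - (l + u) = (a - l) + (b - u)); last by ring.
  by apply: le_lt_trans (le_normcD _ _) _; lra.
have hp : normc (a * b - \det M) < delta.
  rewrite -Hd (_ : a * b - l * u = a * (b - u) + u * (a - l)); last by ring.
  apply: le_lt_trans (le_normcD _ _) _; rewrite !Normc.normcM (normc1 u u1) mul1r.
  have : normc a * normc (b - u) <= normc (b - u) by rewrite ler_piMl.
  lra.
have [P [Pt Pd] PM] := Hdelta a b hs hp.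
exists P => //; exists k; split => //; rewrite iter_Phi_Id.
by apply: (mx2_expr_fixed _ Pt Pd ab Ha Hb); rewrite expn_gt0.
Qed.
End Approximation.

Theorem proposition3p4 (R : realType) :
  closure (periodic_pts R) =
  [set (0 : 'M[R[i]^o]_2)] `|` Lambda0 R `|` Lambda1 R `|` Lambda2 R.
Proof.
rewrite Lambda_trdetE; apply/seteqP; split.
  rewrite [X in _ `<=` X](closure_id _).1; last exact: Lambda_trdet_closed.
  apply: closureS => M [k [k1 HM]]; rewrite iter_Phi_Id in HM.
  by apply: expr_fixed_Lambda_trdet HM; rewrite -{1}(expn0 2) ltn_exp2l.
move=> M HM; have [->|M0] := eqVneq M 0.
  by apply: subset_closure; exists 1%N; rewrite /= /Phi_Id expr0n.
have [l [u [Ht Hd u1 hl]]] := Lambda_trdet_eigen HM M0.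
exact: closure_periodic_of_eigen Ht Hd u1 hl.
Qed.
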